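(* Let $k\ge 1$ be an integer and $p\in[0,1]$. Let $I_1,\dots,I_k$ be independent random variables with $P(I_j=1)=p$, $P(I_j=0)=1-p$. Let $P@i=\frac1i\sum_{j=1}^i I_j$ and $AP@k=\frac1k\sum_{i=1}^k P@i\cdot I_i$. Then $$\operatorname{Var}(AP@k)=\frac5k\,p^3(1-p)+\frac{1}{k^2}\,p(1-p)\Big[p(1-2p)\big(3H_k+H_k^2\big)+(1-p)(1-3p)H_k^{(2)}\Big],$$ where $H_k=\sum_{i=1}^k\frac1i$ and $H_k^{(2)}=\sum_{i=1}^k\frac1{i^2}$.
   Context: This is the online evaluation model: each of the top-$k$ recommended items is relevant independently with probability $p$ ($I_j=1$ iff the item at position $j$ is relevant). *)

(* discrete probability on the finite product space
   {ffun 'I_k -> bool} of outcomes (I_1,...,I_k), with the product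
   (independent Bernoulli(p)) probability mass function. *)
From mathcomp Require Import all_boot all_order all_algebra.
Set Implicit Arguments. Unset Strict Implicit. Unset Printing Implicit Defensive.
Import Order.TTheory GRing.Theory Num.Theory.
Local Open Scope ring_scope.

Section Defs.
Variable R : realFieldType.

Definition bern_prob (k : nat) (p : R) (w : {ffun 'I_k -> bool}) : R :=
  \prod_(j < k) (if w j then p else 1 - p).

Definition Expect (k : nat) (p : R) (X : {ffun 'I_k -> bool} -> R) : R :=
  \sum_(w : {ffun 'I_k -> bool}) bern_prob p w * X w.

Definition Var (k : nat) (p : R) (X : {ffun 'I_k -> bool} -> R) : R :=
  Expect p (fun w => (X w - Expect p X) ^+ 2).

(* the indicator I_{j+1} (0-based index j) *)
Definition Ind (k : nat) (w : {ffun 'I_k -> bool}) (j : 'I_k) : R := (w j)%:R.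

(* P@i = (1/i) * sum_{j=1}^i I_j  (1-based i; 0-based j < i) *)
Definition Pat (k : nat) (w : {ffun 'I_k -> bool}) (i : nat) : R :=
  (i%:R)^-1 * \sum_(j < k | (j < i)%N) Ind w j.

Definition APk (k : nat) (w : {ffun 'I_k -> bool}) : R :=
  (k%:R)^-1 * \sum_(i < k) Pat w i.+1 * Ind w i.

Definition Harm (k : nat) : R := \sum_(i < k) (i.+1%:R)^-1.
Definition Harm2 (k : nat) : R := \sum_(i < k) ((i.+1%:R) ^+ 2)^-1.
End Defs.

(* Write S_n for the number of relevant items among the first n and
   A_n = n * AP@n.  Appending an item b to an outcome gives
   S_(n+1) = S_n + b and A_(n+1) = A_n + b (S_n + 1) / (n + 1), so the
   expectation of a quadratic polynomial in (A_(n+1), S_(n+1)) is an explicit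
   combination of expectations of quadratic polynomials in (A_n, S_n).  An
   induction on n therefore yields closed forms for all first and second
   moments of (A_n, S_n), and Var(AP@k) = (E[A_k^2] - E[A_k]^2) / k^2. *)
From mathcomp Require Import all_boot all_order all_algebra.
From mathcomp Require Import ring.
Set Implicit Arguments. Unset Strict Implicit.
Import Order.TTheory GRing.Theory Num.Theory.
Local Open Scope ring_scope.

Section RconsFfun.
Variable T : Type.

Definition rcons_ffun n (b : T) (w : {ffun 'I_n -> T}) : {ffun 'I_n.+1 -> T} :=
  [ffun i => if unlift ord_max i is Some j then w j else b].

Lemma rcons_ffun_last n b (w : {ffun 'I_n -> T}) : rcons_ffun b w ord_max = b.
Proof. by rewrite ffunE unlift_none. Qed.

Lemma rcons_ffun_widen n b (w : {ffun 'I_n -> T}) (i : 'I_n) :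
  rcons_ffun b w (widen_ord (leqnSn n) i) = w i.
Proof.
have -> : widen_ord (leqnSn n) i = lift ord_max i by apply/val_inj/esym/lift_max.
by rewrite ffunE liftK.
Qed.

End RconsFfun.

Lemma sum_ffunS (T : finType) (V : nmodType) n (F : {ffun 'I_n.+1 -> T} -> V) :
  \sum_(w : {ffun 'I_n.+1 -> T}) F w =
  \sum_(b : T) \sum_(w : {ffun 'I_n -> T}) F (rcons_ffun b w).
Proof.
rewrite pair_big /= (reindex (fun bw => rcons_ffun bw.1 bw.2)) //=.
exists (fun w => (w ord_max, [ffun j => w (lift ord_max j)])) => [[b w] _ | w _].
  by rewrite /= rcons_ffun_last; congr pair; apply/ffunP => j; rewrite !ffunE liftK.
by apply/ffunP => i; rewrite ffunE; case: unliftP => [j ->|->]; rewrite ?ffunE.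
Qed.

Section BernoulliProduct.
Variables (R : realFieldType) (p : R).

Local Notation W n := {ffun 'I_n -> bool}.

Lemma sum_bern_prob n : \sum_(w : W n) bern_prob p w = 1.
Proof.
rewrite /bern_prob -(bigA_distr_bigA (fun _ (b : bool) => if b then p else 1 - p)).
by rewrite big1 // => j _; rewrite big_bool /= addrC subrK.
Qed.

Lemma eq_Expect n (X Y : W n -> R) :
  X =1 Y -> Expect p X = Expect p Y.
Proof. by move=> eqXY; apply: eq_bigr => w _; rewrite eqXY. Qed.

Lemma Expect_cst n (c : R) : Expect p (fun _ : W n => c) = c.
Proof. by rewrite /Expect -mulr_suml sum_bern_prob mul1r. Qed.

Lemma Expect_rcons n (X : W n.+1 -> R) :
  Expect p X = p * Expect p (X \o rcons_ffun true)
             + (1 - p) * Expect p (X \o rcons_ffun false).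
Proof.
rewrite /Expect sum_ffunS big_bool /= !mulr_sumr.
congr (_ + _); apply: eq_bigr => w _; rewrite mulrA; congr (_ * _);
  by rewrite /bern_prob big_ord_recr /= rcons_ffun_last mulrC;
     congr (_ * _); apply: eq_bigr => i _; rewrite rcons_ffun_widen.
Qed.

Definition nrel n (w : W n) : R := \sum_(j < n) Ind R w j.
Definition apsum n (w : W n) : R := \sum_(i < n) Pat R w i.+1 * Ind R w i.

Lemma nrel_rcons n b (w : W n) : nrel (rcons_ffun b w) = nrel w + b%:R.
Proof.
rewrite /nrel big_ord_recr /= /Ind rcons_ffun_last.
by congr (_ + _); apply: eq_bigr => i _; rewrite rcons_ffun_widen.
Qed.

Lemma Pat_rcons n b (w : W n) (i : 'I_n) :
  Pat R (rcons_ffun b w) i.+1 = Pat R w i.+1.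
Proof.
rewrite /Pat big_mkcond big_ord_recr /= ltnNge ltn_ord addr0 [in RHS]big_mkcond.
by congr (_ * _); apply: eq_bigr => j _; rewrite /Ind rcons_ffun_widen.
Qed.

Lemma Pat_rcons_last n b (w : W n) :
  Pat R (rcons_ffun b w) n.+1 = (n.+1%:R)^-1 * (nrel w + b%:R).
Proof.
rewrite /Pat (eq_bigl xpredT) => [|j]; last by rewrite ltn_ord.
by rewrite -nrel_rcons.
Qed.

Lemma apsum_rcons n b (w : W n) :
  apsum (rcons_ffun b w) = apsum w + (n.+1%:R)^-1 * (nrel w + b%:R) * b%:R.
Proof.
rewrite /apsum big_ord_recr /= Pat_rcons_last /Ind rcons_ffun_last.
by congr (_ + _); apply: eq_bigr => i _; rewrite Pat_rcons rcons_ffun_widen.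
Qed.

Definition quad (c0 ca cs cas caa css a s : R) : R :=
  c0 + ca * a + cs * s + cas * (a * s) + caa * a ^+ 2 + css * s ^+ 2.

Definition mean_nrel n : R := n%:R * p.
Definition mean_nrel2 n : R := n%:R * p + n%:R * (n%:R - 1) * p ^+ 2.
Definition mean_apsum n : R := n%:R * p ^+ 2 + p * (1 - p) * Harm R n.
Definition mean_apsum_nrel n : R :=
  p ^+ 3 * n%:R ^+ 2 + 2 * p ^+ 2 * (1 - p) * n%:R
  + (p ^+ 2 * (1 - p) * n%:R + p * (1 - p) * (1 - 2 * p)) * Harm R n.
Definition mean_apsum2 n : R :=
  5 * n%:R * p ^+ 3 * (1 - p)
  + p * (1 - p) * (p * (1 - 2 * p) * (3 * Harm R n + Harm R n ^+ 2)
                   + (1 - p) * (1 - 3 * p) * Harm2 R n)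
  + mean_apsum n ^+ 2.

Lemma Expect_quad n c0 ca cs cas caa css :
  Expect p (fun w : W n => quad c0 ca cs cas caa css (apsum w) (nrel w)) =
  c0 + ca * mean_apsum n + cs * mean_nrel n + cas * mean_apsum_nrel n
  + caa * mean_apsum2 n + css * mean_nrel2 n.
Proof.
elim: n c0 ca cs cas caa css => [|n IHn] c0 ca cs cas caa css.
  under eq_Expect => w do rewrite /apsum /nrel !big_ord0.
  rewrite Expect_cst /mean_apsum2 /mean_apsum /mean_nrel /mean_apsum_nrel.
  by rewrite /mean_nrel2 /Harm /Harm2 !big_ord0 /quad; ring.
set u : R := (n.+1%:R)^-1.
have quad_last (b : bool) a s :
    quad c0 ca cs cas caa css (a + u * (s + b%:R) * b%:R) (s + b%:R) =
    if b then
      quad (c0 + ca * u + cs + cas * u + caa * u ^+ 2 + css)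
           (ca + cas + 2 * caa * u)
           (ca * u + cs + 2 * cas * u + 2 * caa * u ^+ 2 + 2 * css)
           (cas + 2 * caa * u) caa (cas * u + caa * u ^+ 2 + css) a s
    else quad c0 ca cs cas caa css a s.
  by case: b; rewrite /quad /=; ring.
rewrite Expect_rcons.
under eq_Expect => w do rewrite /= apsum_rcons nrel_rcons quad_last.
under [in X in _ + X]eq_Expect => w do rewrite /= apsum_rcons nrel_rcons quad_last.
rewrite !IHn.
have n1_neq0 : n%:R + 1 != 0 :> R by rewrite natr1 pnatr_eq0.
rewrite /u /mean_apsum2 /mean_apsum /mean_nrel /mean_apsum_nrel /mean_nrel2.
by rewrite /Harm /Harm2 !big_ord_recr /= -[n.+1%:R]natr1; field.
Qed.

End BernoulliProduct.
Arguments nrel {R n} w.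
Arguments apsum {R n} w.

Theorem theorem4 (R : realFieldType) (k : nat) (p : R)
  (hk : (1 <= k)%N) (hp0 : 0 <= p) (hp1 : p <= 1) :
  Var p (@APk R k) =
    5 / k%:R * p ^+ 3 * (1 - p)
    + (k%:R ^+ 2)^-1 * p * (1 - p) *
      (p * (1 - 2 * p) * (3 * Harm R k + Harm R k ^+ 2)
       + (1 - p) * (1 - 3 * p) * Harm2 R k).
Proof.
(* The identity is polynomial in p. *)
have k_neq0 : k%:R != 0 :> R by rewrite pnatr_eq0 -lt0n.
set v : R := (k%:R)^-1.
have APk_apsum w : @APk R k w = v * apsum w by [].
have mean_APk : Expect p (@APk R k) = v * mean_apsum p k.
  rewrite (@eq_Expect R p k _ (fun w => quad 0 v 0 0 0 0 (apsum w) (nrel w))).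
    by rewrite Expect_quad; ring.
  by move=> w; rewrite /quad APk_apsum; ring.
rewrite /Var mean_APk; set m := v * _.
rewrite (@eq_Expect R p k _ (fun w =>
  quad (m ^+ 2) (- 2 * m * v) 0 0 (v ^+ 2) 0 (apsum w) (nrel w))).
  by rewrite Expect_quad /m /v /mean_apsum2; field.
by move=> w; rewrite /quad APk_apsum; ring.
Qed.
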